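(* Let $u,u'\in R^{\times}$ and $a,a'\in R$. If $1-q\in R^{\times}$ and $\mathrm{Id}_{H_N^q}(\mathcal{B}_{(u,a)})=\mathrm{Id}_{H_N^q}(\mathcal{B}_{(u',a')})$, then $a'=a$.
   Context: $R$ is a commutative unital ring, $N\ge2$, and $q\in R$ a root of the $N$-th cyclotomic polynomial over $\mathbb{Z}$. $H_N^q$ is the Taft Hopf algebra over $R$: generated by $g,x$ with $g^N=1$, $x^N=0$, $xg=qgx$, $\Delta(g)=g\otimes g$, $\Delta(x)=1\otimes x+x\otimes g$, $\varepsilon(g)=1$, $\varepsilon(x)=0$, free over $R$ with basis $\{g^mx^n:0\le m,n<N\}$. For $u\in R^{\times},a\in R$, $\mathcal{B}_{(u,a)}$ is the $R$-algebra generated by $v_g,v_x$ with $v_g^N=u$, $v_x^N=a$, $v_xv_g=qv_gv_x$, a right $H_N^q$-comodule algebra via $v_g\mapsto v_g\otimes g$, $v_x\mapsto1\otimes x+v_x\otimes g$. Let $Z_i^H$ ($i\ge1$) be copies $\{Z_i^h:h\in H_N^q\}$ of the $R$-module $H_N^q$ and $T=T(\bigoplus_iZ_i^H)$ the tensor algebra with coaction $\delta(Z_i^h)=\sum Z_i^{h_1}\otimes h_2$. $P\in T$ is a polynomial $H_N^q$-identity for a right $H_N^q$-comodule algebra $B$ if $f(P)=0$ for all right $H_N^q$-comodule algebra maps $f:T\to B$; $\mathrm{Id}_{H_N^q}(B)$ is the set of these. *)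

From HB Require Import structures.
From mathcomp Require Import all_boot all_order all_algebra all_field.
From mathcomp Require Import finmap.
Set Implicit Arguments. Unset Strict Implicit. Unset Printing Implicit Defensive.
Import Order.TTheory GRing.Theory.
Local Open Scope ring_scope.

Section Taft.
Variables (R : comPzRingType) (N : nat) (q : R).

(* index (m,n) stands for the basis element g^m x^n of H, resp. v_g^m v_x^n of B *)
Definition bidx := ('I_N * 'I_N)%type.

(* basis vector with nat indices (zero vector if out of range) *)
Definition bv (m n : nat) : {ffun bidx -> R} :=
  [ffun k : bidx => ((k.1 == m :> nat) && (k.2 == n :> nat))%:R].

Definition fscale (I : finType) (r : R) (v : {ffun I -> R}) : {ffun I -> R} :=
  [ffun k => r * v k].
Definition fadd (I : finType) (v w : {ffun I -> R}) : {ffun I -> R} :=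
  [ffun k => v k + w k].

Definition ev (I : finType) (k : I) : {ffun I -> R} := [ffun k' => (k' == k)%:R].

Definition scmul (I : finType) (c : I -> I -> {ffun I -> R})
    (x y : {ffun I -> R}) : {ffun I -> R} :=
  [ffun k => \sum_(i : I) \sum_(j : I) x i * y j * c i j k].

Definition scpow (I : finType) (c : I -> I -> {ffun I -> R}) (one x : {ffun I -> R})
    (k : nat) : {ffun I -> R} := iter k (scmul c x) one.

Definition tens_c (I J : finType) (c1 : I -> I -> {ffun I -> R})
    (c2 : J -> J -> {ffun J -> R}) (p p' : I * J) : {ffun (I * J) -> R} :=
  [ffun kl => c1 p.1 p'.1 kl.1 * c2 p.2 p'.2 kl.2].

Definition tens (I J : finType) (v : {ffun I -> R}) (w : {ffun J -> R})
    : {ffun (I * J) -> R} := [ffun kl => v kl.1 * w kl.2].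

(* Taft algebra: (g^m x^n)(g^m' x^n') = q^(n m') g^(m+m' mod N) x^(n+n'),
   which is 0 when n+n' >= N   (from g^N = 1, x^N = 0, xg = qgx) *)
Definition taft_c (i j : bidx) : {ffun bidx -> R} :=
  if (i.2 + j.2 < N)%N then fscale (q ^+ (i.2 * j.1)) (bv ((i.1 + j.1) %% N) (i.2 + j.2))
  else [ffun => 0].

Definition H1 := bv 0 0.
Definition Hg := bv 1 0.
Definition Hx := bv 0 1.

Definition HH_c := tens_c taft_c taft_c.
Definition HH1 := tens H1 H1.

(* coproduct on the basis: Delta(g^m x^n) = Delta(g)^m Delta(x)^n with
   Delta(g) = g (x) g,  Delta(x) = 1 (x) x + x (x) g *)
Definition Delta (h : bidx) : {ffun (bidx * bidx) -> R} :=
  scmul HH_c (scpow HH_c HH1 (tens Hg Hg) h.1)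
             (scpow HH_c HH1 (fadd (tens H1 Hx) (tens Hx Hg)) h.2).

Variables (u a : R).

(* B_(u,a): (v_g^m v_x^n)(v_g^m' v_x^n')
      = q^(n m') u^((m+m') div N) a^((n+n') div N) v_g^((m+m') mod N) v_x^((n+n') mod N)
   (from v_g^N = u, v_x^N = a, v_x v_g = q v_g v_x) *)
Definition comod_c (i j : bidx) : {ffun bidx -> R} :=
  fscale (q ^+ (i.2 * j.1) * u ^+ ((i.1 + j.1) %/ N) * a ^+ ((i.2 + j.2) %/ N))
    (bv ((i.1 + j.1) %% N) ((i.2 + j.2) %% N)).

Definition B1 := bv 0 0.
Definition Bvg := bv 1 0.
Definition Bvx := bv 0 1.

Definition BH_c := tens_c comod_c taft_c.
Definition BH1 := tens B1 H1.

(* coaction on the basis: rho(v_g^m v_x^n) = rho(v_g)^m rho(v_x)^n with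
   rho(v_g) = v_g (x) g,  rho(v_x) = 1 (x) x + v_x (x) g *)
Definition rho_basis (k : bidx) : {ffun (bidx * bidx) -> R} :=
  scmul BH_c (scpow BH_c BH1 (tens Bvg Hg) k.1)
             (scpow BH_c BH1 (fadd (tens B1 Hx) (tens Bvx Hg)) k.2).

Definition rhoB (b : {ffun bidx -> R}) : {ffun (bidx * bidx) -> R} :=
  [ffun p => \sum_(k : bidx) b k * rho_basis k p].

(* The tensor algebra T = T(\oplus_i Z_i^H): free R-module on words in the
   letters Z_i^(g^m x^n), letter (i,(m,n)); copies are indexed by i : nat. *)
Definition word := seq (nat * bidx).
Definition Talg := {fsfun word -> R with 0}.

(* A family phi i h = image of the generator Z_i^h (h a basis element) in B;
   it determines a unique algebra map T -> B. *)
Definition evalW (phi : nat -> bidx -> {ffun bidx -> R}) (w : word)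
  : {ffun bidx -> R} :=
  foldr (fun z acc => scmul comod_c (phi z.1 z.2) acc) B1 w.

Definition evalT (phi : nat -> bidx -> {ffun bidx -> R}) (P : Talg)
  : {ffun bidx -> R} :=
  [ffun k => \sum_(w <- finsupp P) P w * evalW phi w k].

(* the induced algebra map T -> B is a comodule map: since T is generated by
   the Z_i^h and delta, rho are algebra maps, it suffices that
   rho(phi(Z_i^h)) = sum phi(Z_i^(h_1)) (x) h_2 for all i and basis h *)
Definition comod_family (phi : nat -> bidx -> {ffun bidx -> R}) : Prop :=
  forall (i : nat) (h : bidx),
    rhoB (phi i h) =
    [ffun kl : bidx * bidx =>
       \sum_(p : bidx * bidx) Delta h p * tens (phi i p.1) (ev p.2) kl].

Definition is_Hidentity (P : Talg) : Prop :=
  forall phi, comod_family phi -> evalT phi P = [ffun => 0].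

End Taft.

Definition cyclo_root (R : comPzRingType) (N : nat) (q : R) : bool :=
  (* q is a root of the N-th cyclotomic polynomial Phi_N in Z[X], i.e. the
     image of Phi_N in R[X] evaluated at q vanishes *)
  \sum_(i < size ('Phi_N : {poly int})) (('Phi_N : {poly int})`_i)%:~R * q ^+ i == 0.

Definition is_unit (R : comPzRingType) (r : R) : Prop := exists v : R, r * v = 1.

(* B_(u,a) is isomorphic to H as a comodule (v_g^m v_x^k |-> g^m x^k),
   so a comodule map phi : H -> B is phi(h) = lambda(h_1) v_(h_2) with lambda = eps o phi;
   in particular phi(Z^1) = c, phi(Z^g) = nu v_g and phi(Z^x) = c v_x + mu v_g.  Left
   multiplication by Z_g^(N-1) [Z_x, Z_g] then acts on B as multiplication by
   c nu^N (q - 1) u v_x (the mu-terms cancel), so its N-th power acts on 1 as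
   (c nu^N (q - 1) u)^N a, while (Z_g^N Z_1)^N acts as (c nu^N u)^N.  Hence
   (Z_g^(N-1) [Z_x, Z_g])^N - (q - 1)^N a (Z_g^N Z_1)^N is an H-identity of B_(u,a),
   and evaluating it in B_(u',a') on the identity map gives (u' (q - 1))^N (a' - a) = 0. *)

From HB Require Import structures.
From mathcomp Require Import all_boot all_order all_algebra all_field.
From mathcomp Require Import finmap.
From mathcomp Require Import ring zify.
Set Implicit Arguments. Unset Strict Implicit. Unset Printing Implicit Defensive.
Import GRing.Theory.
Local Open Scope ring_scope.

Section Vectors.
Variables (R : comPzRingType) (I J : finType).
Implicit Types (r s : R) (v w : {ffun I -> R}).

Lemma faddE v w : fadd v w = v + w.
Proof. by apply/ffunP => k; rewrite !ffunE. Qed.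

Lemma fscale1 v : fscale 1 v = v.
Proof. by apply/ffunP => k; rewrite ffunE mul1r. Qed.

Lemma fscale0 v : fscale 0 v = 0.
Proof. by apply/ffunP => k; rewrite !ffunE mul0r. Qed.

Lemma fscaleA r s v : fscale r (fscale s v) = fscale (r * s) v.
Proof. by apply/ffunP => k; rewrite !ffunE mulrA. Qed.

Lemma fscaleBr r v w : fscale r (v - w) = fscale r v - fscale r w.
Proof. by apply/ffunP => k; rewrite !ffunE mulrBr. Qed.

Lemma fscaleN r v : fscale (- r) v = - fscale r v.
Proof. by apply/ffunP => k; rewrite !ffunE mulNr. Qed.

Lemma sum_mul_ev (k0 : I) (f : I -> R) : \sum_k f k * ev R k0 k = f k0.
Proof.
rewrite (bigD1 k0) //= ffunE eqxx mulr1 big1 ?addr0 // => k /negPf nk.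
by rewrite ffunE nk mulr0.
Qed.

Lemma sum_ev_mul (k0 : I) (f : I -> R) : \sum_k ev R k0 k * f k = f k0.
Proof. by rewrite -[RHS](sum_mul_ev k0); apply: eq_bigr => k _; rewrite mulrC. Qed.

Lemma evC (i j : I) : ev R i j = ev R j i.
Proof. by rewrite !ffunE eq_sym. Qed.

Lemma tens_ev (i : I) (j : J) : tens (ev R i) (ev R j) = ev R (i, j).
Proof.
by apply/ffunP => -[x y]; rewrite !ffunE /= xpair_eqE; case: (x == i); case: (y == j);
  rewrite /= ?mulr1 ?mulr0 ?mul0r.
Qed.

End Vectors.

Section StructureConstants.
Variables (R : comPzRingType) (I : finType) (c : I -> I -> {ffun I -> R}).
Implicit Types (r : R) (x y z : {ffun I -> R}).

Lemma scmul_ev i j : scmul c (ev R i) (ev R j) = c i j.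
Proof.
apply/ffunP => k; rewrite ffunE -[RHS](sum_ev_mul i (fun i' => c i' j k)).
apply: eq_bigr => i' _; rewrite -(sum_ev_mul j (fun j' => ev R i i' * c i' j' k)).
by apply: eq_bigr => j' _; rewrite mulrCA mulrA.
Qed.

Lemma scmul_unitl e y : (forall j, c e j = ev R j) -> scmul c (ev R e) y = y.
Proof.
move=> ce; apply/ffunP => k; rewrite ffunE -[RHS](sum_mul_ev k y).
rewrite exchange_big /=; apply: eq_bigr => j _.
transitivity (y j * c e j k); last by rewrite ce !ffunE eq_sym.
by rewrite -(sum_ev_mul e (fun i => y j * c i j k)); apply: eq_bigr => i _; ring.
Qed.

Lemma scmul_unitr e x : (forall i, c i e = ev R i) -> scmul c x (ev R e) = x.
Proof.
move=> ce; apply/ffunP => k; rewrite ffunE -[RHS](sum_mul_ev k x).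
apply: eq_bigr => i _.
transitivity (x i * c i e k); last by rewrite ce !ffunE eq_sym.
by rewrite -(sum_ev_mul e (fun j => x i * c i j k)); apply: eq_bigr => j _; ring.
Qed.

Lemma scmulZl r x y : scmul c (fscale r x) y = fscale r (scmul c x y).
Proof.
apply/ffunP => k; rewrite !ffunE mulr_sumr; apply: eq_bigr => i _.
by rewrite mulr_sumr; apply: eq_bigr => j _; rewrite ffunE; ring.
Qed.

Lemma scmulZr r x y : scmul c x (fscale r y) = fscale r (scmul c x y).
Proof.
apply/ffunP => k; rewrite !ffunE mulr_sumr; apply: eq_bigr => i _.
by rewrite mulr_sumr; apply: eq_bigr => j _; rewrite ffunE; ring.
Qed.

Lemma scmulDl x y z : scmul c (x + y) z = scmul c x z + scmul c y z.
Proof.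
apply/ffunP => k; rewrite !ffunE -big_split; apply: eq_bigr => i _.
by rewrite -big_split; apply: eq_bigr => j _; rewrite ffunE !mulrDl.
Qed.

Lemma scmulDr x y z : scmul c x (y + z) = scmul c x y + scmul c x z.
Proof.
apply/ffunP => k; rewrite !ffunE -big_split; apply: eq_bigr => i _.
by rewrite -big_split; apply: eq_bigr => j _; rewrite ffunE mulrDr mulrDl.
Qed.

Lemma scmulBr x y z : scmul c x (y - z) = scmul c x y - scmul c x z.
Proof.
apply/ffunP => k; rewrite !ffunE -sumrB; apply: eq_bigr => i _.
by rewrite -sumrB; apply: eq_bigr => j _; rewrite !ffunE; ring.
Qed.

Lemma scmul_sumr (T : Type) (s : seq T) (F : T -> {ffun I -> R}) x :
  scmul c x (\sum_(t <- s) F t) = \sum_(t <- s) scmul c x (F t).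
Proof.
apply/ffunP => k; rewrite sum_ffunE ffunE.
under eq_bigr => i _ do under eq_bigr => j _ do
  rewrite sum_ffunE mulr_sumr mulr_suml.
under [RHS]eq_bigr => t _ do rewrite ffunE.
rewrite [RHS]exchange_big; apply: eq_bigr => i _.
by rewrite [RHS]exchange_big.
Qed.

End StructureConstants.

Lemma sum_pair (R : comPzRingType) (I J : finType) (F : I * J -> R) :
  \sum_p F p = \sum_j \sum_i F (i, j).
Proof. by rewrite exchange_big pair_big; apply: eq_bigr => -[]. Qed.

Section Contraction.
Variables (R : comPzRingType) (I J : finType) (e : {ffun I -> R}).

Definition fdot (v : {ffun I -> R}) : R := \sum_k e k * v k.

Definition lcontract (A : {ffun I * J -> R}) : {ffun J -> R} :=
  [ffun l => \sum_k e k * A (k, l)].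

Lemma lcontract_tens v w : lcontract (tens v w) = fscale (fdot v) w.
Proof.
by apply/ffunP => l; rewrite !ffunE mulr_suml; apply: eq_bigr => k _; rewrite ffunE mulrA.
Qed.

Lemma fdot_ev (i : I) : fdot (ev R i) = e i.
Proof. exact: sum_mul_ev. Qed.

Lemma fdotZ r v : fdot (fscale r v) = r * fdot v.
Proof. by rewrite mulr_sumr; apply: eq_bigr => k _; rewrite ffunE mulrCA. Qed.

Lemma lcontractD A B : lcontract (A + B) = lcontract A + lcontract B.
Proof.
by apply/ffunP => l; rewrite !ffunE -big_split; apply: eq_bigr => k _; rewrite ffunE mulrDr.
Qed.

Variables (c1 : I -> I -> {ffun I -> R}) (c2 : J -> J -> {ffun J -> R}).
Hypothesis e_mul : forall i j, fdot (c1 i j) = e i * e j.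

Lemma lcontract_mul A B :
  lcontract (scmul (tens_c c1 c2) A B) = scmul c2 (lcontract A) (lcontract B).
Proof.
apply/ffunP => l; rewrite ffunE [RHS]ffunE.
transitivity (\sum_p e p.1 * A p * \sum_p' e p'.1 * B p' * c2 p.2 p'.2 l).
  under eq_bigr => k _ do rewrite ffunE mulr_sumr.
  rewrite exchange_big; apply: eq_bigr => p _.
  under eq_bigr => k _ do rewrite mulr_sumr.
  rewrite exchange_big mulr_sumr; apply: eq_bigr => p' _.
  transitivity (A p * B p' * c2 p.2 p'.2 l * fdot (c1 p.1 p'.1)).
    by rewrite /fdot mulr_sumr; apply: eq_bigr => k _; rewrite ffunE /=; ring.
  by rewrite e_mul; ring.
rewrite sum_pair; apply: eq_bigr => i _.
transitivity (lcontract A i * \sum_j lcontract B j * c2 i j l).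
  rewrite ffunE mulr_suml; apply: eq_bigr => a _ /=; congr (_ * _).
  by rewrite sum_pair; apply: eq_bigr => j _; rewrite ffunE mulr_suml.
by rewrite mulr_sumr; apply: eq_bigr => j _; rewrite mulrA.
Qed.

Lemma lcontract_pow o X j :
  lcontract (scpow (tens_c c1 c2) o X j) = scpow c2 (lcontract o) (lcontract X) j.
Proof. by rewrite /scpow; elim: j => //= j IH; rewrite lcontract_mul IH. Qed.

End Contraction.

Lemma bv_ev (R : comPzRingType) N (k : bidx N) : bv R N k.1 k.2 = ev R k.
Proof. by apply/ffunP => -[m l]; rewrite !ffunE; case: k. Qed.

Section Taft.
Variables (R : comPzRingType) (n : nat) (q : R).
Local Notation N := n.+2.

Lemma bvE m k : (m < N)%N -> (k < N)%N -> bv R N m k = ev R (inord m, inord k).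
Proof. by move=> lt_m lt_k; rewrite -bv_ev /= !inordK. Qed.

Definition one_idx : bidx N := (ord0, ord0).
Definition g_idx : bidx N := (inord 1, ord0).
Definition x_idx : bidx N := (ord0, inord 1).

Lemma ev_one_idx : ev R one_idx = bv R N 0 0.
Proof. by rewrite -bv_ev. Qed.

Lemma ev_g_idx : ev R g_idx = bv R N 1 0.
Proof. by rewrite -bv_ev /= inordK. Qed.

Lemma ev_x_idx : ev R x_idx = bv R N 0 1.
Proof. by rewrite -bv_ev /= inordK. Qed.

Lemma taft_mul_bv m k m' k' : (m + m' < N)%N -> (k + k' < N)%N ->
  scmul (taft_c q) (bv R N m k) (bv R N m' k') =
  fscale (q ^+ (k * m')) (bv R N (m + m') (k + k')).
Proof.
move=> lt_m lt_k; rewrite (@bvE m k) 1?(@bvE m' k') ?scmul_ev; try lia.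
by rewrite /taft_c /= !inordK ?lt_k ?modn_small //; lia.
Qed.

Lemma taft_expg m : (m < N)%N -> scpow (taft_c q) (H1 R N) (Hg R N) m = bv R N m 0.
Proof.
elim: m => // m IH lt_m; rewrite /scpow iterS -/(scpow _ _ _ _) IH; last lia.
by rewrite taft_mul_bv // expr0 fscale1.
Qed.

Lemma taft_expx k : (k < N)%N -> scpow (taft_c q) (H1 R N) (Hx R N) k = bv R N 0 k.
Proof.
elim: k => // k IH lt_k; rewrite /scpow iterS -/(scpow _ _ _ _) IH; last lia.
by rewrite taft_mul_bv // muln0 expr0 fscale1.
Qed.

Lemma taft_unitl j : taft_c q one_idx j = ev R j.
Proof.
by rewrite /taft_c /= ltn_ord mul0n expr0 fscale1 !add0n modn_small // bv_ev.
Qed.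

Lemma taft_unitr i : taft_c q i one_idx = ev R i.
Proof.
by rewrite /taft_c /= !addn0 ltn_ord muln0 expr0 fscale1 modn_small // bv_ev.
Qed.

Definition counit : {ffun bidx N -> R} := [ffun k : bidx N => (k.2 == 0%N :> nat)%:R].

Lemma fdot_counit_bv m k : (m < N)%N -> (k < N)%N ->
  fdot counit (bv R N m k) = (k == 0%N)%:R.
Proof. by move=> lt_m lt_k; rewrite bvE // fdot_ev ffunE /= inordK. Qed.

Lemma counit_mul i j : fdot counit (taft_c q i j) = counit i * counit j.
Proof.
rewrite /taft_c !ffunE; case: ifP => small.
  rewrite fdotZ fdot_counit_bv ?ltn_pmod //.
  by case: (nat_of_ord i.2) small => [|i2] _; rewrite ?mul0n ?expr0 ?mul1r ?mulr0 ?mul0r.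
rewrite /fdot big1 => [|k _]; last by rewrite !ffunE mulr0.
by case: (nat_of_ord i.2) (nat_of_ord j.2) small => [|i2] [|j2] //= _;
  rewrite ?mulr0 ?mul0r.
Qed.

Lemma lcontract_Delta k : lcontract counit (Delta q k) = ev R k.
Proof.
rewrite /Delta /HH_c (lcontract_mul _ counit_mul) !(lcontract_pow _ counit_mul).
rewrite faddE lcontractD.
rewrite !lcontract_tens !fdot_counit_bv //= fscale0 addr0 !fscale1.
rewrite taft_expg // taft_expx // taft_mul_bv ?addn0 ?add0n //.
by rewrite muln0 expr0 fscale1 bv_ev.
Qed.

End Taft.

Section CoactionIsCoproduct.
Variables (R : comPzRingType) (N : nat) (q u a : R).

Definition bdeg_le (M K : nat) (A : {ffun bidx N * bidx N -> R}) : Prop :=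
  forall p, A p != 0 -> (p.1.1 <= M)%N && (p.1.2 <= K)%N.

Lemma taft_c_neq0 (i j k : bidx N) : taft_c q i j k != 0 ->
  (k.1 == ((i.1 + j.1) %% N)%N :> nat) && (k.2 == (i.2 + j.2)%N :> nat).
Proof.
rewrite /taft_c; case: ifP => _; rewrite !ffunE ?eqxx //.
by case: (_ && _); rewrite ?mulr0 ?eqxx.
Qed.

Lemma comod_c_small (i j : bidx N) : (i.1 + j.1 < N)%N -> (i.2 + j.2 < N)%N ->
  comod_c q u a i j = taft_c q i j.
Proof.
move=> lt_m lt_k; rewrite /comod_c /taft_c lt_k !divn_small // !expr0 !mulr1.
by rewrite (modn_small lt_k).
Qed.

Lemma bdeg_le_tens M K m k (w : {ffun bidx N -> R}) : (m <= M)%N -> (k <= K)%N ->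
  bdeg_le M K (tens (bv R N m k) w).
Proof.
move=> mM kK [[m' k'] l]; rewrite !ffunE /=.
case: andP => [[/eqP-> /eqP->] _ | _]; first by rewrite mM kK.
by rewrite mul0r eqxx.
Qed.

Lemma bdeg_leD M K A B : bdeg_le M K A -> bdeg_le M K B -> bdeg_le M K (A + B).
Proof.
move=> degA degB p; rewrite ffunE.
by have [-> | /degA //] := eqVneq (A p) 0; rewrite add0r => /degB.
Qed.

Section Product.
Variables (M1 K1 M2 K2 : nat) (A B : {ffun bidx N * bidx N -> R}).
Hypotheses (degA : bdeg_le M1 K1 A) (degB : bdeg_le M2 K2 B).
Hypotheses (small_M : (M1 + M2 < N)%N) (small_K : (K1 + K2 < N)%N).

Lemma scmul_BH_HH : scmul (BH_c q u a) A B = scmul (HH_c q) A B.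
Proof.
apply/ffunP => p; rewrite !ffunE; apply: eq_bigr => i _; apply: eq_bigr => j _.
have [-> | /degA/andP[iM iK]] := eqVneq (A i) 0; first by rewrite !mul0r.
have [-> | /degB/andP[jM jK]] := eqVneq (B j) 0; first by rewrite mulr0 !mul0r.
rewrite /BH_c /tens_c comod_c_small //.
  exact: leq_ltn_trans (leq_add iM jM) small_M.
exact: leq_ltn_trans (leq_add iK jK) small_K.
Qed.

Lemma bdeg_le_mul : bdeg_le (M1 + M2) (K1 + K2) (scmul (HH_c q) A B).
Proof.
move=> p; apply: contraR => deg_p; apply/eqP; rewrite ffunE.
apply: big1 => i _; apply: big1 => j _.
have [-> | /degA/andP[iM iK]] := eqVneq (A i) 0; first by rewrite !mul0r.
have [-> | /degB/andP[jM jK]] := eqVneq (B j) 0; first by rewrite mulr0 !mul0r.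
rewrite ffunE; have [-> | /taft_c_neq0/andP[/eqP p1 /eqP p2]] :=
  eqVneq (taft_c q i.1 j.1 p.1) 0; first by rewrite !mul0r mulr0.
move: deg_p; rewrite p1 p2 modn_small ?(leq_add iM jM) ?(leq_add iK jK) //.
exact: leq_ltn_trans (leq_add iM jM) small_M.
Qed.

End Product.

Lemma scpow_BH_HH M K X j : bdeg_le M K X -> (j * M < N)%N -> (j * K < N)%N ->
  bdeg_le (j * M) (j * K) (scpow (HH_c q) (HH1 R N) X j) /\
  scpow (BH_c q u a) (HH1 R N) X j = scpow (HH_c q) (HH1 R N) X j.
Proof.
move=> degX; elim: j => [|j IH] jM jK.
  by split => //; rewrite !mul0n; apply: bdeg_le_tens.
have [||degXj eqXj] := IH; try nia.
rewrite /scpow !iterS -!/(scpow _ _ _ _) eqXj !mulSn.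
by split; [apply: bdeg_le_mul | apply: scmul_BH_HH degX degXj _ _]; rewrite ?mulSn in jM jK.
Qed.

(* No wrap-around (v_g^N = u, v_x^N = a) occurs when computing
   (v_g (x) g)^m (1 (x) x + v_x (x) g)^k for m, k < N, so on the way the structure
   constants of B may be replaced by those of H. *)
Lemma rho_basis_Delta (k : bidx N) : rho_basis q u a k = Delta q k.
Proof.
have degg : bdeg_le 1 0 (tens (Bvg R N) (Hg R N)) by exact: bdeg_le_tens.
have degx : bdeg_le 0 1 (fadd (tens (B1 R N) (Hx R N)) (tens (Bvx R N) (Hg R N))).
  by rewrite faddE; apply: bdeg_leD; apply: bdeg_le_tens.
have lt_k1 := ltn_ord k.1; have lt_k2 := ltn_ord k.2.
have [|| degg_k eqg_k] := scpow_BH_HH (j := k.1) degg; try lia.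
have [|| degx_k eqx_k] := scpow_BH_HH (j := k.2) degx; try lia.
rewrite /rho_basis /Delta -[BH1 R N]/(HH1 R N) eqg_k eqx_k.
apply: scmul_BH_HH degg_k degx_k _ _; lia.
Qed.

End CoactionIsCoproduct.

Section Coproduct.
Variables (R : comPzRingType) (n : nat) (q : R).
Local Notation N := n.+2.

Lemma HH1_ev : HH1 R N = ev R (one_idx n, one_idx n).
Proof. by rewrite /HH1 /H1 -ev_one_idx tens_ev. Qed.

Lemma HH_unitl p : HH_c q (one_idx n, one_idx n) p = ev R p.
Proof. by case: p => p1 p2; rewrite -tens_ev /HH_c /tens_c /= !taft_unitl. Qed.

Lemma HH_unitr p : HH_c q p (one_idx n, one_idx n) = ev R p.
Proof. by case: p => p1 p2; rewrite -tens_ev /HH_c /tens_c /= !taft_unitr. Qed.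

Lemma Delta_one : Delta q (one_idx n) = HH1 R N.
Proof. by rewrite /Delta /scpow /= HH1_ev scmul_unitl //; apply: HH_unitl. Qed.

Lemma Delta_g : Delta q (g_idx n) = tens (Hg R N) (Hg R N).
Proof. by rewrite /Delta /scpow /= inordK //= HH1_ev !scmul_unitr //; apply: HH_unitr. Qed.

Lemma Delta_x : Delta q (x_idx n) = tens (H1 R N) (Hx R N) + tens (Hx R N) (Hg R N).
Proof.
rewrite /Delta /scpow /= inordK //= HH1_ev scmul_unitl ?scmul_unitr ?faddE //.
  exact: HH_unitr.
exact: HH_unitl.
Qed.

End Coproduct.

Section ComoduleFamilies.
Variables (R : comPzRingType) (n : nat) (q u a : R).
Local Notation N := n.+2.

Lemma lcontract_rhoB b : lcontract (counit R n) (rhoB q u a b) = b.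
Proof.
apply/ffunP => l; rewrite ffunE.
under eq_bigr => k _ do rewrite [X in _ * X]ffunE mulr_sumr.
rewrite exchange_big /= -[RHS](sum_mul_ev l b); apply: eq_bigr => k' _.
rewrite evC -(lcontract_Delta q) -(rho_basis_Delta q u a) ffunE mulr_sumr.
by apply: eq_bigr => k _; rewrite mulrCA.
Qed.

Variable phi : nat -> bidx N -> {ffun bidx N -> R}.

Definition comod_form (i : nat) : {ffun bidx N -> R} :=
  [ffun h => fdot (counit R n) (phi i h)].

Hypothesis phi_comod : comod_family q u a phi.

Lemma comod_familyE i h : phi i h = lcontract (comod_form i) (Delta q h).
Proof.
rewrite -[LHS]lcontract_rhoB phi_comod; apply/ffunP => l; rewrite !ffunE.
transitivity (\sum_p comod_form i p.1 * Delta q h p * ev R p.2 l).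
  under eq_bigr => k _ do rewrite [X in _ * X]ffunE mulr_sumr.
  rewrite exchange_big; apply: eq_bigr => p _.
  rewrite [comod_form _ _]ffunE /fdot !mulr_suml; apply: eq_bigr => k _.
  by rewrite [tens _ _ _]ffunE /=; ring.
rewrite sum_pair exchange_big; apply: eq_bigr => j _ /=.
by under eq_bigr => l' _ do rewrite evC; rewrite sum_mul_ev.
Qed.

Lemma comod_family_one i :
  phi i (one_idx n) = fscale (comod_form i (one_idx n)) (bv R N 0 0).
Proof. by rewrite comod_familyE Delta_one lcontract_tens /H1 -ev_one_idx fdot_ev. Qed.

Lemma comod_family_g i :
  phi i (g_idx n) = fscale (comod_form i (g_idx n)) (bv R N 1 0).
Proof. by rewrite comod_familyE Delta_g lcontract_tens /Hg -ev_g_idx fdot_ev. Qed.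

Lemma comod_family_x i :
  phi i (x_idx n) = fscale (comod_form i (one_idx n)) (bv R N 0 1) +
                    fscale (comod_form i (x_idx n)) (bv R N 1 0).
Proof.
rewrite comod_familyE Delta_x lcontractD !lcontract_tens /H1 /Hx /Hg.
by rewrite -ev_one_idx -ev_x_idx !fdot_ev.
Qed.

End ComoduleFamilies.

Lemma comod_family_ev (R : comPzRingType) n (q u a : R) :
  comod_family q u a (fun _ (h : bidx n.+2) => ev R h).
Proof.
move=> i h; apply/ffunP => kl; rewrite !ffunE sum_ev_mul rho_basis_Delta.
rewrite -[LHS](sum_mul_ev kl (Delta q h)); apply: eq_bigr => -[k l] _.
by rewrite tens_ev evC.
Qed.

Section TensorAlgebra.
Variables (R : comPzRingType) (N : nat) (q u a : R).

Definition talg_of (l : seq (word N * R)) : Talg R N :=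
  [fsfun w in seq_fset tt (map fst l) => \sum_(p <- l | p.1 == w) p.2 | 0].

Lemma evalT_talg_of phi l :
  evalT q u a phi (talg_of l) = \sum_(p <- l) fscale p.2 (evalW q u a phi p.1).
Proof.
apply/ffunP => k; rewrite ffunE sum_ffunE.
set S := seq_fset tt (map fst l).
have suppS : (finsupp (talg_of l) `<=` S)%fset.
  apply/fsubsetP => w; rewrite mem_finsupp /talg_of fsfunE.
  by case: ifP => //; rewrite eqxx.
rewrite (big_fset_incl _ suppS) => [|w _ /fsfun_dflt ->]; last by rewrite mul0r.
rewrite (eq_big_seq (fun w =>
  \sum_(p <- l) if p.1 == w then p.2 * evalW q u a phi w k else 0)).
  rewrite exchange_big; apply: eq_big_seq => p pl; rewrite ffunE /=.
  have pS : p.1 \in S by rewrite seq_fsetE map_f.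
  rewrite (bigD1_seq _ pS (seq_fset_uniq _ _)) ifT //= big1 ?addr0 // => w.
  by rewrite eq_sym => /negPf ->.
move=> w wS; rewrite /talg_of fsfunE wS big_mkcond mulr_suml.
by apply: eq_bigr => p _; case: ifP; rewrite ?mul0r.
Qed.

End TensorAlgebra.

Lemma modn_succ_mod x d : ((x %% d).+1 %% d = x.+1 %% d)%N.
Proof. by rewrite -[(x %% d).+1]addn1 -[x.+1]addn1 modnDml. Qed.

Lemma divn_succ_mod x d : (0 < d)%N -> (x %/ d + (x %% d).+1 %/ d = x.+1 %/ d)%N.
Proof. by move=> d_gt0; rewrite [in RHS](divn_eq x d) -addnS divnMDl. Qed.

Section ComoduleAlgebra.
Variables (R : comPzRingType) (n : nat) (q u a : R).
Local Notation N := n.+2.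
Local Notation mulB := (scmul (comod_c q u a)).

Lemma comod_mul_one V : mulB (bv R N 0 0) V = V.
Proof.
rewrite -ev_one_idx; apply: scmul_unitl => j.
rewrite /comod_c /= !add0n mul0n !divn_small ?ltn_ord // !expr0 !mulr1 fscale1.
by rewrite !modn_small ?ltn_ord // bv_ev.
Qed.

Lemma comod_mul_g m k : (m < N)%N -> (k < N)%N ->
  mulB (bv R N 1 0) (bv R N m k) = fscale (u ^+ (m.+1 %/ N)) (bv R N (m.+1 %% N) k).
Proof.
move=> lt_m lt_k; rewrite (@bvE _ _ 1 0) // (@bvE _ _ m k) // scmul_ev /comod_c /=.
by rewrite !inordK // mul0n expr0 mul1r (divn_small lt_k) expr0 mulr1 (modn_small lt_k).
Qed.

Lemma comod_mul_x m k : (m < N)%N -> (k < N)%N ->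
  mulB (bv R N 0 1) (bv R N m k) = fscale (q ^+ m * a ^+ (k.+1 %/ N)) (bv R N m (k.+1 %% N)).
Proof.
move=> lt_m lt_k; rewrite (@bvE _ _ 0 1) // (@bvE _ _ m k) // scmul_ev /comod_c /=.
by rewrite !inordK // mul1n (divn_small lt_m) expr0 mulr1 (modn_small lt_m).
Qed.

End ComoduleAlgebra.

Section TestPolynomial.
Variables (R : comPzRingType) (n : nat) (q : R).
Local Notation N := n.+2.

Definition Z1 : nat * bidx N := (0%N, one_idx n).
Definition Zg : nat * bidx N := (0%N, g_idx n).
Definition Zx : nat * bidx N := (0%N, x_idx n).

Definition word_xg : word N := nseq n.+1 Zg ++ [:: Zx; Zg].
Definition word_gx : word N := nseq n.+1 Zg ++ [:: Zg; Zx].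

Definition comm_step (l : seq (word N * R)) : seq (word N * R) :=
  [seq (word_xg ++ p.1, p.2) | p <- l] ++ [seq (word_gx ++ p.1, - p.2) | p <- l].

Definition gpow_word : word N := flatten (nseq N (nseq N Zg ++ [:: Z1])).

(* (Z_g^(N-1) [Z_x, Z_g])^N - (q - 1)^N a0 (Z_g^N Z_1)^N, with all letters taken
   from the copy Z_0 *)
Definition test_poly (a0 : R) : Talg R N :=
  talg_of (iter N comm_step [:: ([::], 1)] ++ [:: (gpow_word, - ((q - 1) ^+ N * a0))]).

End TestPolynomial.

Section Evaluation.
Variables (R : comPzRingType) (n : nat) (q u a : R).
Local Notation N := n.+2.
Local Notation mulB := (scmul (comod_c q u a)).
Variable phi : nat -> bidx N -> {ffun bidx N -> R}.

(* Words are evaluated by iterated left multiplication, as in evalW: B is never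
   shown to be associative (that would require q^N = 1). *)
Definition lmulW (s : word N) (V : {ffun bidx N -> R}) : {ffun bidx N -> R} :=
  foldr (fun z acc => mulB (phi z.1 z.2) acc) V s.

Definition eval_monomials (l : seq (word N * R)) : {ffun bidx N -> R} :=
  \sum_(p <- l) fscale p.2 (evalW q u a phi p.1).

Lemma lmulW_cat s t V : lmulW (s ++ t) V = lmulW s (lmulW t V).
Proof. exact: foldr_cat. Qed.

Lemma evalW_cat s w : evalW q u a phi (s ++ w) = lmulW s (evalW q u a phi w).
Proof. exact: foldr_cat. Qed.

Lemma lmulW_scale s r V : lmulW s (fscale r V) = fscale r (lmulW s V).
Proof. by elim: s => //= z s ->; rewrite scmulZr. Qed.

Lemma lmulW_sub s V W : lmulW s (V - W) = lmulW s V - lmulW s W.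
Proof. by elim: s => //= z s ->; rewrite scmulBr. Qed.

Lemma lmulW_sum s (l : seq (word N * R)) F :
  lmulW s (\sum_(p <- l) fscale p.2 (F p)) = \sum_(p <- l) fscale p.2 (lmulW s (F p)).
Proof.
elim: s => //= z s ->; rewrite scmul_sumr.
by apply: eq_bigr => p _; rewrite scmulZr.
Qed.

Variables (c nu mu : R).
Hypotheses (phi_one : phi 0%N (one_idx n) = fscale c (bv R N 0 0))
  (phi_g : phi 0%N (g_idx n) = fscale nu (bv R N 1 0))
  (phi_x : phi 0%N (x_idx n) = fscale c (bv R N 0 1) + fscale mu (bv R N 1 0)).

Lemma lmulW_gpow j m k : (m < N)%N -> (k < N)%N ->
  lmulW (nseq j (Zg n)) (bv R N m k) =
  fscale (nu ^+ j * u ^+ ((m + j) %/ N)) (bv R N ((m + j) %% N) k).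
Proof.
move=> lt_m lt_k; elim: j => [|j IH].
  by rewrite addn0 divn_small // modn_small // !expr0 mulr1 fscale1.
rewrite /= -/(lmulW _ _) IH phi_g scmulZl scmulZr comod_mul_g ?ltn_pmod // !fscaleA.
rewrite addnS modn_succ_mod -(divn_succ_mod (m + j) (isT : (0 < N)%N)) exprD exprS.
by congr fscale; ring.
Qed.

Definition comm_op (V : {ffun bidx N -> R}) : {ffun bidx N -> R} :=
  lmulW (word_xg n) V - lmulW (word_gx n) V.

Lemma comm_op_scale r V : comm_op (fscale r V) = fscale r (comm_op V).
Proof. by rewrite /comm_op !lmulW_scale fscaleBr. Qed.

Lemma comm_op_bv k : (k < N)%N ->
  comm_op (bv R N 0 k) =
  fscale (c * nu ^+ N * (q - 1) * u * a ^+ (k.+1 %/ N)) (bv R N 0 (k.+1 %% N)).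
Proof.
move=> lt_k; have lt_k1 : (k.+1 %% N < N)%N by apply: ltn_pmod.
have mul_g_0 m : (m < N)%N -> mulB (bv R N 1 0) (bv R N 0 m) = bv R N 1 m.
  by move=> lt_m; rewrite comod_mul_g // divn_small // modn_small // expr0 fscale1.
have commutator :
  mulB (phi 0%N (x_idx n)) (mulB (phi 0%N (g_idx n)) (bv R N 0 k)) -
  mulB (phi 0%N (g_idx n)) (mulB (phi 0%N (x_idx n)) (bv R N 0 k)) =
  fscale (c * nu * (q - 1) * a ^+ (k.+1 %/ N)) (bv R N 1 (k.+1 %% N)).
  rewrite phi_g phi_x !(scmulDl, scmulZl, scmulZr) mul_g_0 // !comod_mul_x //.
  rewrite scmulDr !scmulZr mul_g_0 //.
  by apply/ffunP => l; rewrite !ffunE expr0 expr1; ring.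
rewrite /comm_op /word_xg /word_gx !lmulW_cat -lmulW_sub [lmulW [:: _; _] _]/= commutator lmulW_scale.
rewrite lmulW_gpow // add1n divnn modnn /= fscaleA.
by congr fscale; rewrite [nu ^+ N]exprS expr1; ring.
Qed.

Lemma iter_comm_op j :
  iter j comm_op (bv R N 0 0) =
  fscale ((c * nu ^+ N * (q - 1) * u) ^+ j * a ^+ (j %/ N)) (bv R N 0 (j %% N)).
Proof.
elim: j => [|j IH]; first by rewrite div0n mod0n !expr0 mulr1 fscale1.
rewrite iterS IH comm_op_scale comm_op_bv ?ltn_pmod // fscaleA modn_succ_mod.
rewrite -(divn_succ_mod j (isT : (0 < N)%N)) exprD (exprS _ j).
by congr fscale; ring.
Qed.

Lemma eval_comm_step l : eval_monomials (comm_step l) = comm_op (eval_monomials l).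
Proof.
rewrite /eval_monomials big_cat !big_map /comm_op !lmulW_sum -sumrN.
by congr (_ + _); apply: eq_bigr => p _; rewrite evalW_cat // fscaleN.
Qed.

Lemma eval_iter_comm_step j :
  eval_monomials (iter j (@comm_step R n) [:: ([::], 1)]) = iter j comm_op (bv R N 0 0).
Proof.
elim: j => [|j IH]; first by rewrite /eval_monomials big_seq1 fscale1.
by rewrite !iterS eval_comm_step IH.
Qed.

Lemma evalW_gpow_word :
  evalW q u a phi (gpow_word n) = fscale ((c * nu ^+ N * u) ^+ N) (bv R N 0 0).
Proof.
set block := nseq N (Zg n) ++ [:: Z1 n].
suff eval_blocks j : evalW q u a phi (flatten (nseq j block)) =
                     fscale ((c * nu ^+ N * u) ^+ j) (bv R N 0 0) by apply: eval_blocks.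
elim: j => [|j IH]; first by rewrite expr0 fscale1.
rewrite -[flatten _]/(block ++ flatten (nseq j block)) evalW_cat IH lmulW_cat.
rewrite [lmulW [:: _] _]/= phi_one scmulZl comod_mul_one !lmulW_scale lmulW_gpow //.
by rewrite add0n divnn modnn /= !fscaleA; congr fscale; rewrite (exprS _ j); ring.
Qed.

Lemma evalT_test_poly_of a0 :
  evalT q u a phi (test_poly n q a0) =
  fscale ((c * nu ^+ N * u) ^+ N * (q - 1) ^+ N * (a - a0)) (bv R N 0 0).
Proof.
rewrite evalT_talg_of big_cat -/(eval_monomials _) eval_iter_comm_step iter_comm_op.
rewrite big_seq1 evalW_gpow_word divnn modnn /= fscaleA.
rewrite [_ * (q - 1) * u]mulrAC exprMn expr1.
move: ((c * nu ^+ N * u) ^+ N) ((q - 1) ^+ N) => K Q.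
by apply/ffunP => l; rewrite !ffunE; ring.
Qed.

End Evaluation.

Lemma evalT_test_poly (R : comPzRingType) n (q u a a0 : R) phi :
  comod_family q u a phi ->
  evalT q u a phi (test_poly n q a0) =
  fscale ((comod_form phi 0%N (one_idx n) * comod_form phi 0%N (g_idx n) ^+ n.+2 * u) ^+ n.+2 *
          (q - 1) ^+ n.+2 * (a - a0)) (bv R n.+2 0 0).
Proof.
move=> phi_comod.
exact: (evalT_test_poly_of q u a (comod_family_one phi_comod 0%N)
  (comod_family_g phi_comod 0%N) (comod_family_x phi_comod 0%N) a0).
Qed.

Lemma test_poly_is_Hidentity (R : comPzRingType) n (q u a : R) :
  is_Hidentity q u a (test_poly n q a).
Proof.
move=> phi phi_comod; apply/ffunP => l.
by rewrite evalT_test_poly // subrr !ffunE !mulr0 mul0r.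
Qed.

Lemma comod_form_ev (R : comPzRingType) n i (h : bidx n.+2) :
  comod_form (fun _ h => ev R h) i h = counit R n h.
Proof. by rewrite ffunE fdot_ev. Qed.

Lemma is_unit_opp_sub (R : comPzRingType) (x y : R) : is_unit (x - y) -> is_unit (y - x).
Proof. by case=> w xyw; exists (- w); rewrite mulrN -mulNr opprB. Qed.

Lemma is_unit_expr_mul_eq0 (R : comPzRingType) (x y : R) k :
  is_unit x -> x ^+ k * y = 0 -> y = 0.
Proof.
case=> w xw; elim: k => [|k IH]; first by rewrite mul1r.
by rewrite exprS -mulrA => xy0; apply: IH; rewrite -[_ * y]mul1r -xw mulrAC xy0 mul0r.
Qed.

Theorem proposition3p2 (R : comPzRingType) (N : nat) (q : R)
  (HN : (2 <= N)%N) (Hq : cyclo_root N q)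
  (u u' a a' : R) (Hu : is_unit u) (Hu' : is_unit u')
  (H1q : is_unit (1 - q))
  (HId : forall P : Talg R N,
           is_Hidentity q u a P <-> is_Hidentity q u' a' P) :
  a' = a.
Proof.
case: N HN Hq HId => [|[|n]] // _ _ HId.
have id_u'a' := (HId (test_poly n q a)).1 (@test_poly_is_Hidentity R n q u a).
have := id_u'a' _ (@comod_family_ev R n q u' a').
rewrite evalT_test_poly; last exact: comod_family_ev.
move=> /(congr1 (fun v : {ffun bidx n.+2 -> R} => v (one_idx n))).
rewrite !comod_form_ev !ffunE /=.
rewrite expr1n !mul1r mulr1 -mulrA => /(is_unit_expr_mul_eq0 Hu').
move/(is_unit_expr_mul_eq0 (is_unit_opp_sub H1q))/eqP.
by rewrite subr_eq0 => /eqP.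
Qed.
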